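(* There is no semi-planar function $f:\mathbb{Z}_6\to\mathbb{Z}_6$.
   Context: $\mathbb{Z}_6$ denotes the additive cyclic group of integers modulo $6$. A function $f:\mathbb{Z}_6\to\mathbb{Z}_6$ is semi-planar if for every non-zero $a\in\mathbb{Z}_6$ and every $y\in\mathbb{Z}_6$, the equation $f(x+a)-f(x)=y$ has either $0$ or $2$ solutions $x\in\mathbb{Z}_6$. *)

From mathcomp Require Import all_boot all_algebra.
Set Implicit Arguments. Unset Strict Implicit. Unset Printing Implicit Defensive.
Import GRing.Theory.
Local Open Scope ring_scope.

Definition semi_planar (f : 'Z_6 -> 'Z_6) : Prop :=
  forall a y : 'Z_6, a != 0 ->
    (#|[set x : 'Z_6 | (f (x + a)%R - f x)%R == y]| == 0)%N \/
    (#|[set x : 'Z_6 | (f (x + a)%R - f x)%R == y]| == 2)%N.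

(* Adding an affine map x |-> c * x + b to f shifts every difference function
   x |-> f (x + a) - f x by the constant c * a, so it preserves the numbers of
   solutions, hence semi-planarity.  Subtracting the affine map through
   (0, f 0) and (1, f 1) we may assume f 0 = f 1 = 0, and none of the
   6 ^ 4 = 1296 remaining functions is semi-planar, by exhaustive computation. *)

From mathcomp Require Import all_boot all_algebra.
Set Implicit Arguments. Unset Strict Implicit. Unset Printing Implicit Defensive.
Import GRing.Theory.
Local Open Scope ring_scope.

Section DifferenceCount.

Variable G : finZmodType.

Definition diff_count (f : G -> G) (a y : G) : nat :=
  #|[set x | f (x + a) - f x == y]|.

Lemma eq_diff_count (f g : G -> G) a y :
  f =1 g -> diff_count f a y = diff_count g a y.
Proof. by move=> fg; apply: eq_card => x; rewrite !inE !fg. Qed.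

End DifferenceCount.

Lemma diff_count_add_affine (R : finPzRingType) (f : R -> R) (c b a y : R) :
  diff_count (fun x => f x + c * x + b) a y = diff_count f a (y - c * a).
Proof.
apply: eq_card => x; rewrite !inE.
have -> : f (x + a) + c * (x + a) + b - (f x + c * x + b) = f (x + a) - f x + c * a.
  by rewrite [X in _ - X]addrC addrKA mulrDr opprD addrACA [c * x + _]addrC addrK.
by rewrite -subr_eq opprK.
Qed.

Lemma eq_semi_planar (f g : 'Z_6 -> 'Z_6) : f =1 g -> semi_planar f -> semi_planar g.
Proof.
by move=> fg spf a y a0; have := eq_diff_count a y fg; rewrite /diff_count => <-; apply: spf.
Qed.

Lemma semi_planar_add_affine (f : 'Z_6 -> 'Z_6) (c b : 'Z_6) :
  semi_planar f -> semi_planar (fun x => f x + c * x + b).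
Proof.
move=> spf a y a0; have := diff_count_add_affine f c b a y.
by rewrite /diff_count => ->; apply: spf.
Qed.

(* An explicit enumeration, since [enum 'Z_6] does not reduce under vm_compute. *)
Definition Z6 : seq 'Z_6 := [:: 0; 1; 2; 3; 4; 5].

Lemma mem_Z6 (x : 'Z_6) : x \in Z6.
Proof. by case: x => [[|[|[|[|[|[|//]]]]]] ?]. Qed.

Lemma card_Z6 (P : pred 'Z_6) : #|[set x | P x]| = count P Z6.
Proof.
rewrite cardsE cardE -size_filter; apply/perm_size/uniq_perm.
- exact: enum_uniq.
- exact: filter_uniq.
- by move=> x; rewrite mem_enum mem_filter mem_Z6 andbT.
Qed.

Definition semi_planarb (f : 'Z_6 -> 'Z_6) : bool :=
  all (fun a => (a == 0) ||
    all (fun y => count (fun x => f (x + a) - f x == y) Z6 \in [:: 0%N; 2%N]) Z6) Z6.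

Lemma semi_planarP (f : 'Z_6 -> 'Z_6) : reflect (semi_planar f) (semi_planarb f).
Proof.
apply: (iffP allP) => [spf a y a0 | spf a _].
  move: (spf a (mem_Z6 a)); rewrite (negbTE a0) => /allP /(_ y (mem_Z6 y)).
  by rewrite -card_Z6 !inE => /orP.
case: eqP => [// | /eqP a0]; apply/allP => y _.
by rewrite -card_Z6 !inE; apply/orP/spf.
Qed.

Definition normalized (v2 v3 v4 v5 : 'Z_6) (x : 'Z_6) : 'Z_6 :=
  nth 0 [:: 0; 0; v2; v3; v4; v5] x.

Lemma normalizedE (g : 'Z_6 -> 'Z_6) :
  g 0 = 0 -> g 1 = 0 -> g =1 normalized (g 2) (g 3) (g 4) (g 5).
Proof.
move=> g0 g1 [[|[|[|[|[|[|//]]]]]] ?]; rewrite /normalized /=;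
  [rewrite -g0 | rewrite -g1 | | | |]; congr g; exact: val_inj.
Qed.

Lemma normalized_not_semi_planar (v2 v3 v4 v5 : 'Z_6) :
  ~ semi_planar (normalized v2 v3 v4 v5).
Proof.
have no_semi_planar_normalized : all (fun v2 => all (fun v3 => all (fun v4 =>
    all (fun v5 => ~~ semi_planarb (normalized v2 v3 v4 v5)) Z6) Z6) Z6) Z6.
  by vm_compute.
move/semi_planarP; apply/negP; move: no_semi_planar_normalized.
by move=> /allP/(_ _ (mem_Z6 v2))/allP/(_ _ (mem_Z6 v3))/allP/(_ _ (mem_Z6 v4))
  /allP/(_ _ (mem_Z6 v5)).
Qed.

Theorem theorem5 : ~ (exists f : 'Z_6 -> 'Z_6, semi_planar f).
Proof.
case=> f spf.
pose g x := f x + (f 0 - f 1) * x + - f 0.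
have g0 : g 0 = 0 by rewrite /g mulr0 addr0 subrr.
have g1 : g 1 = 0 by rewrite /g mulr1 addrCA subrr addr0 subrr.
apply: (@normalized_not_semi_planar (g 2) (g 3) (g 4) (g 5)).
exact/(eq_semi_planar (normalizedE g0 g1))/semi_planar_add_affine.
Qed.
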